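(* Let $n\ge 2$, $0<p<1$, and let $\{V^{(h)}\}_{h\ge 0}$ be a homogeneous Markov chain on $\mathcal V=\{v_1,\dots,v_n\}$ with transition matrix $Q$ given by $$Q_{ij}=\Pr[V^{(h)}=v_j\mid V^{(h-1)}=v_i]=\frac{1-p}{1-p^n}\,p^{\,(j-i-1)\bmod n},\qquad 1\le i,j\le n,$$ (so row $i$ is $\frac{1-p}{1-p^n}(\dots,p^{n-1},1,p,p^2,\dots)$ with the entry $1$ in column $i+1$ cyclically). Let $\pi^{(h)}$ be the probability vector of $V^{(h)}$ (with arbitrary initial distribution $\pi^{(0)}$), and let $\pi^{(\infty)}=(1/n,\dots,1/n)^\top$. Then $\pi^{(h)}\to\pi^{(\infty)}$ as $h\to\infty$, and for all $h\ge 0$, $$\|\pi^{(h)}-\pi^{(\infty)}\|_1\le \sqrt n\,|\lambda_1|^h,\qquad\text{where } |\lambda_1|=\frac{1-p}{\sqrt{1+p^2-2p\cos\frac{2\pi}{n}}}.$$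
   Context: $\|\cdot\|_1$ is the $\ell_1$ norm. This chain describes the sequence of non-skipped nodes on a fixed logical ring where each node is independently skipped with probability $p$. *)

From HB Require Import structures.
From mathcomp Require Import all_boot all_order all_algebra.
From mathcomp Require Import all_classical all_reals all_analysis.
Set Implicit Arguments. Unset Strict Implicit. Unset Printing Implicit Defensive.
Import Order.TTheory GRing.Theory Num.Theory.
Local Open Scope ring_scope.

(* Transition matrix of the skip chain on the ring v_1..v_n (0-indexed here:
   node i is v_{i+1}).  Q i j = (1-p)/(1-p^n) * p^((j - i - 1) mod n). *)
Definition skipQ (R : realType) (n : nat) (p : R) : 'M[R]_n :=
  \matrix_(i < n, j < n) ((1 - p) / (1 - p ^+ n) * p ^+ ((j + n - i.+1) %% n)).

Definition prob_vec (R : realType) (n : nat) (v : 'rV[R]_n) : Prop :=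
  (forall i, 0 <= v 0 i) /\ \sum_(i < n) v 0 i = 1.

Fixpoint distr (R : realType) (n : nat) (Q : 'M[R]_n) (pi0 : 'rV[R]_n)
  (h : nat) : 'rV[R]_n :=
  if h is h'.+1 then distr Q pi0 h' *m Q else pi0.

Definition unif (R : realType) (n : nat) : 'rV[R]_n := const_mx (n%:R^-1).

Definition l1norm (R : realType) (n : nat) (v : 'rV[R]_n) : R :=
  \sum_(i < n) `|v 0 i|.

From HB Require Import structures.
From mathcomp Require Import all_boot all_order all_algebra.
From mathcomp Require Import all_classical all_reals all_analysis.
From mathcomp Require Import ring lra zify.
Set Implicit Arguments. Unset Strict Implicit. Unset Printing Implicit Defensive.
Import Order.TTheory GRing.Theory Num.Theory.
Import numFieldNormedType.Exports.
Local Open Scope classical_set_scope.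
Local Open Scope ring_scope.

(* Write e_h = pi^(h) - pi^(oo).  The proof is an l2 contraction argument.
   1. The uniform law is stationary and Q preserves total mass, so e_h has
      mass 0 and e_(h+1) = e_h Q.
   2. Row recursion: y = x Q satisfies y_(j+1) - p y_j = (1 - p) x_j (the chain
      reaches j + 1 either from j or by skipping j).  Squaring and summing,
      (1 - p)^2 |x|^2 = (1 + p^2) |y|^2 - 2 p <y, shift y>.
   3. Discrete Wirtinger inequality on the n-cycle, proved by expanding
      |y|^2 and <y, shift y> in the cosine/sine basis of the roots of unity:
      for mean-zero y, <y, shift y> <= cos (2 pi / n) |y|^2.
   Hence (1 + p^2 - 2 p cos (2 pi / n)) |e_(h+1)|^2 <= (1 - p)^2 |e_h|^2, i.e.
   |e_h|_2 <= lambda^h |e_0|_2 <= lambda^h; Cauchy-Schwarz gives the l1 bound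
   sqrt n * lambda^h and, since lambda < 1 for n >= 2, the convergence. *)

Section RootsOfUnitySums.
Variables (R : realType) (n : nat).
Hypothesis n_gt0 : (0 < n)%N.
Local Notation theta := (2 * pi / n%:R : R).

Lemma theta_mul_n : n%:R * theta = pi *+ 2.
Proof. by rewrite mulrC divfK ?pnatr_eq0 -?lt0n // mulr_natl. Qed.

(* Dirichlet-kernel telescoping: 2 sin(a/2) sum_(k<N) cos(a k) telescopes. *)
Lemma sum_cos_arith (a : R) (N : nat) :
  sin (a / 2) * 2 * \sum_(k < N) cos (a * k%:R) = sin (a * N%:R - a / 2) + sin (a / 2).
Proof.
have step k : sin (a / 2) * 2 * cos (a * k%:R) =
    sin (a * k.+1%:R - a / 2) - sin (a * k%:R - a / 2).
  have -> : a * k.+1%:R - a / 2 = a * k%:R + a / 2 by rewrite mulrS; field.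
  by rewrite sinD sinB; ring.
rewrite big_distrr /=; under eq_bigr do rewrite step.
rewrite -(big_mkord xpredT (fun k => sin (a * k.+1%:R - a / 2) - sin (a * k%:R - a / 2))).
by rewrite telescope_sumr // mulr0 sub0r sinN opprK.
Qed.

Lemma sum_cos_mult_angle (m : nat) :
  \sum_(k < n) cos (m%:R * theta * k%:R) = if (n %| m)%N then n%:R else 0.
Proof.
have reduce k : cos (m%:R * theta * k%:R) = cos ((m %% n)%:R * theta * k%:R).
  rewrite {1}(divn_eq m n) -[RHS](periodicn (@cosD2pi R) (m %/ n * k)).
  by congr cos; rewrite -theta_mul_n -mulr_natr !natrD !natrM; ring.
under eq_bigr do rewrite reduce.
rewrite /dvdn; case: eqP => [->|/eqP r_neq0].
  by under eq_bigr do rewrite !mul0r cos0; rewrite sumr_const card_ord.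
set r := (m %% n)%N; set a := r%:R * theta.
have r_pos : (0 < r)%N by rewrite lt0n.
have r_ltn : (r < n)%N by rewrite ltn_pmod.
have half_a : a / 2 = pi * (r%:R / n%:R).
  by rewrite /a; field; rewrite pnatr_eq0 -lt0n.
have sin_pos : 0 < sin (a / 2).
  have q_pos : 0 < r%:R / n%:R :> R by rewrite divr_gt0 // ltr0n.
  have q_lt1 : r%:R / n%:R < 1 :> R by rewrite ltr_pdivrMr ?ltr0n // mul1r ltr_nat.
  have pi_pos := pi_gt0 R.
  by apply: sin_gt0_pi; rewrite half_a; apply/andP; split; nra.
have := sum_cos_arith a n.
have -> : a * n%:R - a / 2 = - (a / 2) + pi *+ 2 *+ r.
  by rewrite -theta_mul_n /a -mulr_natr; ring.
rewrite periodicn ?sinN ?addNr; last exact: sinD2pi.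
by move/eqP; rewrite !mulf_eq0 (gt_eqF sin_pos) pnatr_eq0 /= => /eqP.
Qed.

Lemma sum_cos_int_angle (x : R) (m : nat) : x = m%:R - n%:R ->
  \sum_(k < n) cos (x * theta * k%:R) = if (n %| m)%N then n%:R else 0.
Proof.
move=> ->; rewrite -sum_cos_mult_angle; apply: eq_bigr => k _.
rewrite -(periodicn (@cosD2pi R) k); congr cos.
by rewrite -theta_mul_n -mulr_natr; ring.
Qed.

End RootsOfUnitySums.

Section AngleBounds.
Variables (R : realType) (n : nat).
Hypothesis n_gt0 : (0 < n)%N.
Local Notation theta := (2 * pi / n%:R : R).

Lemma angle_in_0pi (k : nat) : (k.*2 <= n)%N -> 0 <= theta * k%:R <= pi.
Proof.
move=> kn; have pi_pos := pi_gt0 R.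
have -> : theta * k%:R = pi * ((k.*2)%:R / n%:R).
  by rewrite -muln2 natrM; field; rewrite pnatr_eq0 -lt0n.
have q_ge0 : 0 <= (k.*2)%:R / n%:R :> R by rewrite divr_ge0.
have q_le1 : (k.*2)%:R / n%:R <= 1 :> R by rewrite ler_pdivrMr ?ltr0n // mul1r ler_nat.
by apply/andP; split; nra.
Qed.

Lemma cos_angle_le (k : nat) : (0 < k < n)%N -> cos (theta * k%:R) <= cos theta.
Proof.
wlog kn : k / (k.*2 <= n)%N => [hwlog /andP[k_gt0 k_ltn]|/andP[k_gt0 _]].
  have [|nk] := leqP k.*2 n; first by move=> ?; apply: hwlog => //; apply/andP.
  have -> : cos (theta * k%:R) = cos (theta * (n - k)%:R).
    rewrite natrB ?(ltnW k_ltn) // -cosN -(periodicn (@cosD2pi R) 1).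
    by congr cos; rewrite -(@theta_mul_n R n n_gt0); ring.
  by apply: hwlog; [lia | apply/andP; split; lia].
have one_le_k : 1 <= k%:R :> R by rewrite ler1n.
have theta_pos : 0 < theta by rewrite divr_gt0 ?ltr0n // mulr_gt0 ?pi_gt0.
have theta_0pi : 0 <= theta <= pi.
  by have := @angle_in_0pi 1; rewrite mulr1; apply; lia.
rewrite leNgt ltr_cos ?in_itv /= ?angle_in_0pi ?theta_0pi //.
by rewrite -leNgt ler_peMr // ltW.
Qed.

End AngleBounds.

Lemma cos_angle_lt1 (R : realType) n : (1 < n)%N -> cos (2 * pi / n%:R) < 1 :> R.
Proof.
move=> n_gt1; have n_gt0 : (0 < n)%N := ltnW n_gt1.
have theta_0pi : 0 <= (2 * pi / n%:R : R) <= pi.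
  by have := @angle_in_0pi R n n_gt0 1; rewrite mulr1; apply; lia.
have theta_pos : 0 < (2 * pi / n%:R : R) by rewrite divr_gt0 ?ltr0n // mulr_gt0 ?pi_gt0.
by rewrite -[X in _ < X]cos0 ltr_cos ?in_itv /= ?theta_0pi ?lexx ?pi_ge0.
Qed.

Lemma dvdn_sub_ord n (l : 'I_n) (m : nat) :
  (l <= m)%N -> (n %| m - l)%N = (l == m %% n :> nat)%N.
Proof. by move=> lm; rewrite -eqn_mod_dvd // [(l %% n)%N]modn_small // eq_sym. Qed.

Lemma dvdn_ord_diff n (j l : 'I_n) : (n %| j + n - l)%N = (l == j).
Proof.
have lj : (l <= j + n)%N by have := ltn_ord l; lia.
by rewrite dvdn_sub_ord // modnDr modn_small.
Qed.

Lemma dvdn_ord_diffS n (j l : 'I_n) : (n %| j + n.+1 - l)%N = (l == ordS j).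
Proof.
have lj : (l <= j + n.+1)%N by have := ltn_ord l; lia.
by rewrite dvdn_sub_ord // addnS -addSn modnDr.
Qed.

Lemma sum_mul_if (R : realType) n (a : 'I_n) (F : 'I_n -> R) (c : R) :
  \sum_l F l * (if l == a then c else 0) = F a * c.
Proof. by rewrite (bigD1 a) //= eqxx big1 ?addr0 // => l /negbTE ->; rewrite mulr0. Qed.

(* |sum_j y_j e^(i a_j)|^2 written with real trigonometric functions. *)
Lemma sum_cos_sq_add_sum_sin_sq (R : realType) n (y a : 'I_n -> R) :
  (\sum_j y j * cos (a j)) ^+ 2 + (\sum_j y j * sin (a j)) ^+ 2 =
  \sum_j \sum_l y j * y l * cos (a j - a l).
Proof.
rewrite !expr2 !big_distrl -big_split /=; apply: eq_bigr => j _.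
rewrite !big_distrr -big_split /=; apply: eq_bigr => l _.
by rewrite cosB; ring.
Qed.

Section CycleWirtinger.
Variables (R : realType) (n : nat).
Hypothesis n_gt1 : (1 < n)%N.
Local Notation theta := (2 * pi / n%:R : R).

Let n_gt0 : (0 < n)%N. Proof. exact: ltnW. Qed.

(* Spectral weights cos theta - cos (theta k) of the cycle: their cosine transform
   is supported on the diagonal and the two neighbouring diagonals. *)
Lemma cycle_kernel (j l : 'I_n) :
  \sum_(k < n) (cos theta - cos (theta * k%:R)) *
    cos (j%:R * theta * k%:R - l%:R * theta * k%:R) =
  cos theta * (if l == j then n%:R else 0)
  - (if l == ordS j then n%:R else 0) / 2 - (if j == ordS l then n%:R else 0) / 2.
Proof.
have prod_to_sum k : (cos theta - cos (theta * k%:R)) *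
      cos (j%:R * theta * k%:R - l%:R * theta * k%:R) =
    cos theta * cos ((j%:R - l%:R) * theta * k%:R)
    - cos ((j%:R - l%:R + 1) * theta * k%:R) / 2
    - cos ((l%:R - j%:R + 1) * theta * k%:R) / 2.
  have -> : j%:R * theta * k%:R - l%:R * theta * k%:R =
    (j%:R - l%:R) * theta * k%:R by ring.
  have -> : (j%:R - l%:R + 1) * theta * k%:R =
    (j%:R - l%:R) * theta * k%:R + theta * k%:R by ring.
  have -> : (l%:R - j%:R + 1) * theta * k%:R =
    - ((j%:R - l%:R) * theta * k%:R - theta * k%:R) by ring.
  by rewrite cosN cosD cosB; field.
under eq_bigr do rewrite prod_to_sum.
rewrite !sumrB -!mulr_suml -mulr_sumr.
have lj := ltn_ord l; have jl := ltn_ord j.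
rewrite (@sum_cos_int_angle R n n_gt0 _ (j + n - l)); last first.
  by rewrite natrB ?natrD; [ring | lia].
rewrite (@sum_cos_int_angle R n n_gt0 _ (j + n.+1 - l)); last first.
  by rewrite natrB ?natrD; [ring | lia].
rewrite (@sum_cos_int_angle R n n_gt0 _ (l + n.+1 - j)); last first.
  by rewrite natrB ?natrD; [ring | lia].
by rewrite dvdn_ord_diff !dvdn_ord_diffS.
Qed.

Variable y : 'I_n -> R.

Lemma cycle_quadratic_form :
  \sum_(k < n) (cos theta - cos (theta * k%:R)) *
     \sum_j \sum_l y j * y l * cos (j%:R * theta * k%:R - l%:R * theta * k%:R) =
  n%:R * (cos theta * \sum_i y i ^+ 2 - \sum_i y i * y (ordS i)).
Proof.
transitivity (\sum_j \sum_l y j * y l * \sum_(k < n) (cos theta - cos (theta * k%:R)) *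
    cos (j%:R * theta * k%:R - l%:R * theta * k%:R)).
  under eq_bigr do rewrite big_distrr /=.
  rewrite exchange_big; apply: eq_bigr => j _.
  under eq_bigr do rewrite big_distrr /=.
  rewrite exchange_big; apply: eq_bigr => l _; rewrite big_distrr /=.
  by apply: eq_bigr => k _; ring.
have split_if (j l : 'I_n) : y j * y l * (cos theta * (if l == j then n%:R else 0)
    - (if l == ordS j then n%:R else 0) / 2 - (if j == ordS l then n%:R else 0) / 2) =
    y j * y l * (if l == j then cos theta * n%:R else 0)
    - y j * y l * (if l == ordS j then n%:R / 2 else 0)
    - y l * y j * (if j == ordS l then n%:R / 2 else 0).
  by case: (l == j); case: (l == ordS j); case: (j == ordS l); rewrite ?mulr0 ?mul0r; ring.
under eq_bigr => j _ do under eq_bigr => l _ do rewrite cycle_kernel split_if.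
under eq_bigr => j _ do rewrite !sumrB !sum_mul_if.
rewrite !sumrB [X in _ - _ - X]exchange_big /=.
under [X in _ - _ - X]eq_bigr => l _ do rewrite sum_mul_if.
rewrite -!mulr_suml; under [in RHS]eq_bigr do rewrite expr2.
by field.
Qed.

Hypothesis y_sum0 : \sum_i y i = 0.

(* Discrete Wirtinger inequality on the n-cycle: for a mean-zero y the
   autocorrelation at lag one is at most the second largest eigenvalue
   cos (2 pi / n) of the cyclic averaging operator times |y|^2. *)
Lemma cycle_wirtinger : \sum_i y i * y (ordS i) <= cos theta * \sum_i y i ^+ 2.
Proof.
have spectrum_ge0 : 0 <= \sum_(k < n) (cos theta - cos (theta * k%:R)) *
    \sum_j \sum_l y j * y l * cos (j%:R * theta * k%:R - l%:R * theta * k%:R).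
  apply: sumr_ge0 => k _.
  rewrite -(@sum_cos_sq_add_sum_sin_sq R n y (fun j : 'I_n => j%:R * theta * k%:R)) /=.
  have [k0 | k_neq0] := eqVneq (k : nat) 0%N.
    under eq_bigr do rewrite k0 mulr0 cos0 mulr1.
    under [X in _ + X ^+ 2]eq_bigr do rewrite k0 mulr0 sin0 mulr0.
    by rewrite y_sum0 big1 // expr0n /= addr0 mulr0.
  apply: mulr_ge0; last by rewrite addr_ge0 ?sqr_ge0.
  by rewrite subr_ge0 cos_angle_le // lt0n k_neq0 ltn_ord.
by move: spectrum_ge0; rewrite cycle_quadratic_form pmulr_rge0 ?ltr0n // subr_ge0.
Qed.

End CycleWirtinger.

Lemma sum_ordS (R : realType) n (F : 'I_n -> R) : \sum_i F (ordS i) = \sum_i F i.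
Proof. by rewrite [RHS](reindex_inj (@ordS_inj n)). Qed.

(* A sequence on the cycle that is multiplied by a at each step, with a^2 <> 1,
   vanishes: its squared mass would be multiplied by a^2. *)
Lemma ordS_geometric_eq0 (R : realType) n (a : R) (z : 'I_n -> R) :
  a ^+ 2 != 1 -> (forall j, z (ordS j) = a * z j) -> forall j, z j = 0.
Proof.
move=> a2_neq1 zS j.
have mass_fixed : (1 - a ^+ 2) * \sum_i z i ^+ 2 = 0.
  rewrite mulrBl mul1r mulr_sumr -{1}(@sum_ordS R n (fun i => z i ^+ 2)) -sumrB.
  by rewrite big1 // => i _; rewrite zS exprMn subrr.
move/eqP: mass_fixed; rewrite mulf_eq0 subr_eq0 eq_sym (negbTE a2_neq1) /=.
move=> /eqP /(psumr_eq0P (fun i _ => sqr_ge0 (z i)))/(_ j isT) /eqP.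
by rewrite sqrf_eq0 => /eqP.
Qed.

Section SkipChain.
Variables (R : realType) (n : nat) (p : R).
Hypotheses (p_ge0 : 0 <= p) (p_lt1 : p < 1).

Local Notation Q := (skipQ n p).

Lemma skip_exponent_ordS (i j : 'I_n) :
  ((ordS j + n - i.+1) %% n = if i == j then 0 else ((j + n - i.+1) %% n).+1)%N.
Proof.
have ltin := ltn_ord i; have ltjn := ltn_ord j.
have -> : (ordS j : nat) = (j.+1 %% n)%N by [].
rewrite -addnBA // modnDml addSn modnS addnBA //.
have -> : ((j + n - i.+1).+1 = j + n - i)%N by lia.
by rewrite dvdn_ord_diff eq_sym.
Qed.

Lemma skipQ_ordS (i j : 'I_n) :
  Q i (ordS j) - p * Q i j = if i == j then 1 - p else 0.
Proof.
have one_sub_pn : 1 - p ^+ n != 0.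
  by rewrite subr_eq0 eq_sym lt_eqF // exprn_ilt1 // -lt0n (leq_ltn_trans _ (ltn_ord i)).
rewrite !mxE skip_exponent_ordS; case: eqP => [<- | _]; last by rewrite exprS; ring.
have -> : ((i + n - i.+1) %% n = n.-1)%N.
  by have lt_in := ltn_ord i; rewrite modn_small; lia.
rewrite expr0 mulr1 mulrCA -exprS prednK; last by have := ltn_ord i; lia.
by rewrite -{1}[_ / _]mulr1 -mulrBr divfK.
Qed.

(* The law one step later, y = x Q, solves y_(j+1) = p y_j + (1 - p) x_j:
   from a source other than j, the chain lands on j + 1 exactly when it would
   have landed on j but j was skipped. *)
Lemma skipQ_step (x : 'rV[R]_n) (j : 'I_n) :
  (x *m Q) 0 (ordS j) - p * (x *m Q) 0 j = (1 - p) * x 0 j.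
Proof.
rewrite !mxE mulr_sumr -sumrB.
under eq_bigr => i _ do rewrite [p * _]mulrCA -mulrBr (skipQ_ordS i j).
by rewrite sum_mul_if mulrC.
Qed.

Lemma skipQ_mass (x : 'rV[R]_n) : \sum_j (x *m Q) 0 j = \sum_j x 0 j.
Proof.
have one_sub_p : 1 - p != 0 by rewrite subr_eq0 eq_sym lt_eqF.
apply: (mulfI one_sub_p); rewrite [RHS]mulr_sumr.
under [RHS]eq_bigr => j _ do rewrite -(skipQ_step x j).
by rewrite sumrB (@sum_ordS R n (fun j => (x *m Q) 0 j)) -mulr_sumr mulrBl mul1r.
Qed.

(* The uniform distribution is stationary (Q is doubly stochastic): the
   deviation z = u Q - u satisfies z_(j+1) = p z_j around the whole ring. *)
Lemma unif_skipQ : unif R n *m Q = unif R n.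
Proof.
have unifE k : unif R n 0 k = n%:R^-1 by rewrite mxE.
pose z k := (unif R n *m Q) 0 k - unif R n 0 k.
have zS k : z (ordS k) = p * z k.
  have := skipQ_step (unif R n) k; rewrite /z !unifE.
  by move: ((unif R n *m Q) 0 _) ((unif R n *m Q) 0 _) => a b step; lra.
have p2_neq1 : p ^+ 2 != 1 by rewrite lt_eqF // exprn_ilt1.
have z0 := ordS_geometric_eq0 p2_neq1 zS.
by apply/rowP => j; apply/eqP; rewrite -subr_eq0; apply/eqP; apply: z0.
Qed.

End SkipChain.

(* One step of the chain contracts mean-zero vectors in l2: this combines the
   recursion y_(j+1) - p y_j = (1 - p) x_j with the Wirtinger inequality. *)
Lemma skipQ_contraction (R : realType) n (p : R) (x : 'rV[R]_n) :
  (1 < n)%N -> 0 <= p -> p < 1 -> \sum_j x 0 j = 0 ->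
  (1 + p ^+ 2 - 2 * p * cos (2 * pi / n%:R)) * \sum_j (x *m skipQ n p) 0 j ^+ 2
  <= (1 - p) ^+ 2 * \sum_j x 0 j ^+ 2.
Proof.
move=> n_gt1 p_ge0 p_lt1 x_sum0; set y := x *m skipQ n p.
have y_sum0 : \sum_j y 0 j = 0 by rewrite skipQ_mass.
have wirtinger := cycle_wirtinger n_gt1 y_sum0.
have step_sq : \sum_j (y 0 (ordS j) - p * y 0 j) ^+ 2 = (1 - p) ^+ 2 * \sum_j x 0 j ^+ 2.
  by rewrite mulr_sumr; apply: eq_bigr => j _; rewrite skipQ_step // exprMn.
have expand : \sum_j (y 0 (ordS j) - p * y 0 j) ^+ 2 =
    (1 + p ^+ 2) * \sum_j y 0 j ^+ 2 - 2 * p * \sum_j y 0 j * y 0 (ordS j).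
  have expand_sq j : (y 0 (ordS j) - p * y 0 j) ^+ 2 =
      y 0 (ordS j) ^+ 2 + (p ^+ 2 * y 0 j ^+ 2 - 2 * p * (y 0 j * y 0 (ordS j))).
    by ring.
  rewrite (eq_bigr _ (fun j _ => expand_sq j)) big_split /= sumrB.
  by rewrite (sum_ordS (fun j => y 0 j ^+ 2)) -!mulr_sumr; ring.
rewrite -step_sq expand; nra.
Qed.

Lemma prob_vec_dev_sum0 (R : realType) n (v : 'rV[R]_n) :
  prob_vec v -> \sum_j (v - unif R n) 0 j = 0.
Proof.
move=> [_ v_sum1]; have n_gt0 : (0 < n)%N.
  by case: n v v_sum1 => // v; rewrite big_ord0 => /eqP; rewrite eq_sym oner_eq0.
under eq_bigr do rewrite !mxE.
rewrite sumrB v_sum1 sumr_const card_ord -[_ *+ n]mulr_natr mulVf ?subrr //.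
by rewrite pnatr_eq0 -lt0n.
Qed.

Lemma prob_vec_dev_sq (R : realType) n (v : 'rV[R]_n) :
  prob_vec v -> \sum_j (v - unif R n) 0 j ^+ 2 <= 1.
Proof.
move=> v_prob; have dev_sum0 := prob_vec_dev_sum0 v_prob.
case: v_prob => v_ge0 v_sum1; set e := v - unif R n.
have eE j : e 0 j = v 0 j - n%:R^-1 by rewrite !mxE.
have -> : \sum_j e 0 j ^+ 2 = \sum_j e 0 j * v 0 j.
  transitivity (\sum_j (e 0 j * v 0 j - n%:R^-1 * e 0 j)).
    by apply: eq_bigr => j _; rewrite eE; ring.
  by rewrite sumrB -mulr_sumr dev_sum0 mulr0 subr0.
rewrite -v_sum1; apply: ler_sum => j _.
have v_le1 : v 0 j <= 1 by rewrite -v_sum1 (bigD1 j) //= lerDl sumr_ge0.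
have inv_ge0 : 0 <= n%:R^-1 :> R by rewrite invr_ge0.
by have := v_ge0 j; rewrite eE; nra.
Qed.

Lemma sqr_sum_le (R : realType) n (a : 'I_n -> R) :
  (\sum_i a i) ^+ 2 <= n%:R * \sum_i a i ^+ 2.
Proof.
apply: (le_trans (y := \sum_i \sum_j (a i ^+ 2 + a j ^+ 2) / 2)).
  rewrite expr2 big_distrl /=; apply: ler_sum => i _.
  rewrite big_distrr /=; apply: ler_sum => j _.
  by have := sqr_ge0 (a i - a j); nra.
under eq_bigr => i _ do rewrite -mulr_suml big_split /= sumr_const card_ord.
rewrite -mulr_suml big_split /= sumr_const card_ord sumrMnl -mulr2n.
set S := \sum_(i < n) _.
by rewrite -[S *+ n *+ 2]mulr_natr mulfK ?pnatr_eq0 // mulr_natl.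
Qed.

Lemma l1norm_le_sqrt (R : realType) n (v : 'rV[R]_n) (c : R) :
  0 <= c -> \sum_j v 0 j ^+ 2 <= c ^+ 2 -> l1norm v <= Num.sqrt n%:R * c.
Proof.
move=> c_ge0 v_l2; have l1_ge0 : 0 <= l1norm v by rewrite sumr_ge0.
rewrite -(ger0_norm l1_ge0) -sqrtr_sqr -(ger0_norm c_ge0) -sqrtr_sqr.
rewrite -sqrtrM ?ler0n // ler_wsqrtr // (le_trans (sqr_sum_le _)) //.
rewrite ler_wpM2l ?ler0n //.
have -> : \sum_j `|v 0 j| ^+ 2 = \sum_j v 0 j ^+ 2.
  by apply: eq_bigr => j _; exact: real_normK (num_real _).
exact: v_l2.
Qed.

Lemma mx_norm_le_l1norm (R : realType) n (v : 'rV[R]_n) : `|v| <= l1norm v.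
Proof.
have l1_ge0 : 0 <= l1norm v by rewrite sumr_ge0.
have -> : `|v| = mx_norm v by [].
rewrite mx_normrE; elim/big_ind: _ => //.
  by move=> a b a_le b_le; rewrite ge_max a_le b_le.
move=> [i j] _ /=; rewrite (ord1 i) /l1norm (bigD1 j) //= lerDl.
by apply: sumr_ge0 => k _; exact: normr_ge0.
Qed.

Lemma cvg_l1_geometric (R : realType) n (u : nat -> 'rV[R]_n) (a : 'rV[R]_n) (C q : R) :
  0 <= q < 1 -> (forall h, l1norm (u h - a) <= C * q ^+ h) -> u @ \oo --> a.
Proof.
move=> /andP[q_ge0 q_lt1] bound.
have geo0 : (fun h => C * q ^+ h) @ \oo --> (0 : R).
  rewrite -(mulr0 C); apply: cvgM; first exact: cvg_cst.
  by apply: cvg_expr; rewrite ger0_norm.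
apply/cvgrPdist_le => eps eps_pos; near=> h.
rewrite distrC (le_trans (mx_norm_le_l1norm _)) // (le_trans (bound h)) //.
apply: le_trans (real_ler_norm (num_real _)) _.
by near: h; exact: cvgr0_norm_le geo0 _ eps_pos.
Unshelve. all: end_near.
Qed.

(* The contraction rate |lambda_1| = (1 - p) / sqrt (1 + p^2 - 2 p cos (2 pi / n)),
   the modulus of the subdominant eigenvalue of the circulant matrix skipQ. *)
Definition skip_rate (R : realType) (n : nat) (p : R) : R :=
  (1 - p) / Num.sqrt (1 + p ^+ 2 - 2 * p * cos (2 * pi / n%:R)).

Section SkipRate.
Variables (R : realType) (n : nat) (p : R).
Hypotheses (p_ge0 : 0 <= p) (p_lt1 : p < 1).
Local Notation K := (1 + p ^+ 2 - 2 * p * cos (2 * pi / n%:R)).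

(* K = (1 - p)^2 + 2 p (1 - cos (2 pi / n)) is positive. *)
Lemma skip_denominator_gt0 : 0 < K.
Proof.
have gap : 0 <= 2 * p * (1 - cos (2 * pi / n%:R)).
  by rewrite !mulr_ge0 // subr_ge0 cos_le1.
have : 0 < (1 - p) ^+ 2 by rewrite exprn_gt0 // subr_gt0.
have -> : K = (1 - p) ^+ 2 + 2 * p * (1 - cos (2 * pi / n%:R)) by ring.
by lra.
Qed.

Lemma skip_rate_ge0 : 0 <= skip_rate n p.
Proof. by rewrite divr_ge0 ?sqrtr_ge0 // subr_ge0 ltW. Qed.

Lemma skip_rate_sqr : skip_rate n p ^+ 2 * K = (1 - p) ^+ 2.
Proof.
by rewrite expr_div_n sqr_sqrtr ?ltW ?divfK ?gt_eqF ?skip_denominator_gt0.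
Qed.

Lemma skip_rate_lt1 : (1 < n)%N -> 0 < p -> skip_rate n p < 1.
Proof.
move=> n_gt1 p_gt0; have cos_lt1 := cos_angle_lt1 R n_gt1.
rewrite ltr_pdivrMr ?sqrtr_gt0 ?skip_denominator_gt0 // mul1r.
rewrite -[X in X < _](ger0_norm (_ : 0 <= 1 - p)) ?subr_ge0 ?ltW //.
by rewrite -sqrtr_sqr ltr_sqrt ?skip_denominator_gt0 //; nra.
Qed.

End SkipRate.

Lemma distr_dev_sq_decay (R : realType) n (p : R) (pi0 : 'rV[R]_n) h :
  (1 < n)%N -> 0 <= p -> p < 1 -> prob_vec pi0 ->
  \sum_j (distr (skipQ n p) pi0 h - unif R n) 0 j ^+ 2 <= (skip_rate n p ^+ h) ^+ 2.
Proof.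
move=> n_gt1 p_ge0 p_lt1 pi0_prob.
pose e h := distr (skipQ n p) pi0 h - unif R n.
have eS k : e k.+1 = e k *m skipQ n p by rewrite /e /= mulmxBl unif_skipQ.
have e_sum0 k : \sum_j e k 0 j = 0.
  by elim: k => [|k IH]; [exact: prob_vec_dev_sum0 | rewrite eS skipQ_mass].
rewrite -/(e h); elim: h => [|h IH]; first by rewrite expr0 expr1n prob_vec_dev_sq.
have contract := skipQ_contraction n_gt1 p_ge0 p_lt1 (e_sum0 h).
rewrite -(skip_rate_sqr n p_ge0 p_lt1) -eS in contract.
set K := 1 + _ - _ in contract; set r := skip_rate n p in contract *.
have step : \sum_j e h.+1 0 j ^+ 2 <= r ^+ 2 * \sum_j e h 0 j ^+ 2.
  by move: contract; rewrite -mulrA mulrCA ler_pM2l // skip_denominator_gt0.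
rewrite (le_trans step) // [r ^+ h.+1]exprS (exprMn 2 r).
by apply: ler_wpM2l; [exact: sqr_ge0 | exact: IH].
Qed.

Theorem lemma3 (R : realType) (n : nat) (p : R) (pi0 : 'rV[R]_n) :
  (2 <= n)%N -> 0 < p -> p < 1 -> prob_vec pi0 ->
  (distr (skipQ n p) pi0 @ \oo --> unif R n) /\
  (forall h : nat,
     l1norm (distr (skipQ n p) pi0 h - unif R n) <=
     Num.sqrt (n%:R) *
       ((1 - p) / Num.sqrt (1 + p ^+ 2 - 2 * p * cos (2 * pi / n%:R))) ^+ h).
Proof.
move=> n_ge2 p_gt0 p_lt1 pi0_prob; have p_ge0 := ltW p_gt0.
have rate_ge0 := skip_rate_ge0 n p_lt1.
have l2_bound h := distr_dev_sq_decay h n_ge2 p_ge0 p_lt1 pi0_prob.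
have l1_bound h : l1norm (distr (skipQ n p) pi0 h - unif R n) <=
    Num.sqrt n%:R * skip_rate n p ^+ h.
  exact: l1norm_le_sqrt (exprn_ge0 h rate_ge0) (l2_bound h).
split; last exact: l1_bound.
apply: cvg_l1_geometric l1_bound.
by rewrite rate_ge0 skip_rate_lt1.
Qed.
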